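(* Let $X$ be a one-sided subshift with $\sigma(X)=X$ such that $Sp_l(X,\sigma)$ is finite. Then \[Sp_l(\widetilde{X},\sigma_{\widetilde{X}})=\imath(Sp_l(X,\sigma)),\] and consequently $|Sp_l(\widetilde{X},\sigma_{\widetilde{X}})|=|Sp_l(X,\sigma)|$.
   Context: $X\subseteq\mathcal{A}^{\mathbb{N}}$ is a closed shift-invariant set over a finite alphabet $\mathcal{A}$, $\sigma$ the left shift. For a continuous map $T$ on a space $Y$, $Sp_l(Y,T)=\{y: |T^{-1}(\{y\})|\ge 2\}$. The cover: for $x\in X$ and $l\ge0$ let $P_l(x)=\{\mu\in\mathcal{L}(X): |\mu|=l,\ \mu x\in X\}$. Let $\mathcal{I}=\{(k,l)\in\mathbb{N}^2: k\le l\}$, ordered by $(k,l)\preceq(k',l')$ iff $k\le k'$ and $l-k\le l'-k'$. For $(k,l)\in\mathcal{I}$ write $x\overset{k,l}{\sim}y$ iff $x_{[0,k)}=y_{[0,k)}$ and $P_l(\sigma^k(x))=P_l(\sigma^k(y))$; let ${}_kX_l=X/\overset{k,l}{\sim}$ (a finite discrete set) with classes ${}_k[x]_l$. For $(k,l)\preceq(k',l')$ the map ${}_{k'}[x]_{l'}\mapsto{}_k[x]_l$ is well defined, and $\widetilde{X}$ is the projective limit of the system $({}_kX_l)_{(k,l)\in\mathcal{I}}$ with these maps: a point is $\tilde{x}=(\tilde{x}_{(k,l)})_{(k,l)\in\mathcal{I}}$ with $\tilde{x}_{(k,l)}\in{}_kX_l$ compatible with the bonding maps, with the projective limit topology. The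 shift $\sigma_{\widetilde{X}}$ is given by $\sigma_{\widetilde{X}}(\tilde{x})_{(k,l)}={}_k[\sigma(z)]_l$ where $z\in X$ is any representative of $\tilde{x}_{(k+1,l+1)}$. The map $\imath:X\to\widetilde{X}$ is $\imath(x)=({}_k[x]_l)_{(k,l)\in\mathcal{I}}$ (injective). $\sigma_{\widetilde{X}}$ is a surjective local homeomorphism of the compact zero-dimensional metrizable space $\widetilde{X}$. *)

From HB Require Import structures.
From mathcomp Require Import all_boot.
From mathcomp Require Import boolp classical_sets cardinality.
Set Implicit Arguments. Unset Strict Implicit. Unset Printing Implicit Defensive.
Local Open Scope classical_set_scope.

Section Defs.
Variable A : finType.
Notation seqA := (nat -> A).

Definition shift (x : seqA) : seqA := fun n => x n.+1.
Definition shiftn (k : nat) (x : seqA) : seqA := fun n => x (n + k).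

Definition wcat (mu : seq A) (x : seqA) : seqA :=
  fun n => if n < size mu then nth (x 0) mu n else x (n - size mu).

(* X is closed in the product topology of A^N (A discrete): a sequence all of
   whose prefixes are prefixes of points of X belongs to X. *)
Definition closed_seqset (X : set seqA) : Prop :=
  forall x, (forall n, exists y, X y /\ forall i, i < n -> y i = x i) -> X x.

Definition lang (X : set seqA) : set (seq A) :=
  [set mu | exists y, X y /\ exists j, forall i, i < size mu -> nth (y 0) mu i = y (i + j)].

Definition Pl (X : set seqA) (l : nat) (x : seqA) : set (seq A) :=
  [set mu | lang X mu /\ size mu = l /\ X (wcat mu x)].

Definition kl_equiv (X : set seqA) (k l : nat) (x y : seqA) : Prop :=
  (forall i, i < k -> x i = y i) /\ Pl X l (shiftn k x) = Pl X l (shiftn k y).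

Definition cls (X : set seqA) (k l : nat) (x : seqA) : set seqA :=
  [set y | X y /\ kl_equiv X k l x y].

(* Points of the projective limit. The index set I = {(k,l) : k <= l} with
   (k,l) <= (k',l') iff k <= k' and l-k <= l'-k' is reindexed bijectively and
   order-isomorphically by (k,d) = (k, l-k) in N x N with the product order.
   A point is the family  xt k d = class at index (k, k+d). *)
Definition tpoint := nat -> nat -> set seqA.

Definition Xt (X : set seqA) : set tpoint :=
  [set xt | (forall k d, exists z, X z /\ xt k d = cls X k (k + d) z) /\
            (forall k d k' d', k <= k' -> d <= d' ->
               forall z, xt k' d' z -> xt k d = cls X k (k + d) z)].

Definition sigmat (X : set seqA) (xt : tpoint) : tpoint :=
  fun k d => [set y | exists z, xt k.+1 d z /\ cls X k (k + d) (shift z) y].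

Definition imath (X : set seqA) (x : seqA) : tpoint :=
  fun k d => cls X k (k + d) x.
End Defs.

Definition Spl {T : Type} (Y : set T) (f : T -> T) : set T :=
  [set y | Y y /\ exists x1 x2, Y x1 /\ Y x2 /\ x1 <> x2 /\ f x1 = y /\ f x2 = y].

From mathcomp Require Import all_boot.
From mathcomp Require Import boolp classical_sets cardinality.
From mathcomp Require Import zify.
Set Implicit Arguments. Unset Strict Implicit. Unset Printing Implicit Defensive.
Local Open Scope classical_set_scope.
Local Open Scope card_scope.

(* Since [imath] is an injective conjugacy of [shift] into [sigmat], it maps
   [Spl X shift] injectively into [Spl (Xt X) (sigmat X)].  Conversely, let [xt]
   have two distinct preimages [y1], [y2].  Their limit points in [X] (which
   exist as [X] is closed) differ in the first letter, since otherwise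
   [y1 = y2], and both shift to the limit point [x] of [xt]; so [x] is in
   [Spl X shift].  At every level (k, l), representatives [u1], [u2] of [y1],
   [y2] give a point [shift u1] of the class of [xt] with the two preimages
   [u1] and [u2 0 :: shift u1], the latter in [X] because the P-sets of
   [shift u1] and [shift u2] agree.  Thus every class of [xt] meets the finite
   set [Spl X shift], whose points are separated by finitely many coordinates;
   hence [x] lies in every class of [xt], i.e. [xt = imath X x]. *)

Section Words.
Variable A : finType.
Implicit Types (x z w : nat -> A) (mu nu : seq A).

Lemma wcat_cat mu nu x : wcat mu (wcat nu x) = wcat (mu ++ nu) x.
Proof.
apply: funext => n; rewrite /wcat size_cat nth_cat.
case: ltnP => h1; first by rewrite ltn_addr //; exact: set_nth_default.
case: ltnP => h2; first by rewrite ifT //; lia.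
by rewrite ifF ?subnDA //; apply/negbTE; lia.
Qed.

Lemma wcat_nil x : wcat [::] x = x.
Proof. by apply: funext => n; rewrite /wcat subn0. Qed.

Lemma shiftn0 x : shiftn 0 x = x.
Proof. by apply: funext => n; rewrite /shiftn addn0. Qed.

Lemma shiftnS k x : shiftn k.+1 x = shift (shiftn k x).
Proof. by apply: funext => n; rewrite /shiftn /shift addSnnS. Qed.

Lemma shiftn_shift k x : shiftn k (shift x) = shiftn k.+1 x.
Proof. by apply: funext => n; rewrite /shiftn /shift addnS. Qed.

Lemma shiftn_wcat mu x : shiftn (size mu) (wcat mu x) = x.
Proof.
apply: funext => n; rewrite /shiftn /wcat ifF ?addnK //.
by apply/negbTE; rewrite -leqNgt leq_addl.
Qed.

Lemma wcat_mkseq_shiftn k z w :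
  (forall i, i < k -> z i = w i) -> wcat (mkseq z k) (shiftn k w) = w.
Proof.
move=> zw; apply: funext => n; rewrite /wcat /shiftn size_mkseq.
by case: ltnP => h; [rewrite nth_mkseq // zw | rewrite subnK].
Qed.

Lemma shiftn_cons k x : shiftn k x = wcat [:: x k] (shiftn k.+1 x).
Proof. by apply: funext => -[|n]; rewrite /wcat /shiftn //= subn1 /= addnS. Qed.

Lemma shift_wcat1 a x : shift (wcat [:: a] x) = x.
Proof. by apply: funext => n; rewrite /shift /wcat /= subn1. Qed.

Lemma wcat1_shift x : wcat [:: x 0] (shift x) = x.
Proof. by apply: funext => -[|n]; rewrite /shift /wcat //= subn1. Qed.

End Words.

Section PSets.
Variable A : finType.
Variable X : set (nat -> A).
Implicit Types (x v : nat -> A) (mu nu : seq A).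

Definition Pset l v : set (seq A) := [set mu | size mu = l /\ X (wcat mu v)].

Lemma PlE l v : Pl X l v = Pset l v.
Proof.
apply/seteqP; split => mu /=; first by case=> _ [].
case=> size_mu X_mu; split => //; exists (wcat mu v); split => //; exists 0 => i lti.
by rewrite addn0 /wcat lti; exact: set_nth_default.
Qed.

Lemma Pset_wcat1 l a v mu : Pset l (wcat [:: a] v) mu <-> Pset l.+1 v (mu ++ [:: a]).
Proof. by rewrite /Pset /= wcat_cat size_cat addn1; split=> -[/eqP ? ?]; split=> //; exact/eqP. Qed.

Hypothesis shiftX : (@shift A) @` X = X.

Lemma X_shift x : X x -> X (shift x).
Proof. by move=> Xx; rewrite -shiftX; exists x. Qed.

Lemma X_shiftn k x : X x -> X (shiftn k x).
Proof. by move=> Xx; elim: k => [|k IH]; rewrite ?shiftn0 // shiftnS; exact: X_shift. Qed.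

Lemma X_extend_left n x : X x -> exists nu, size nu = n /\ X (wcat nu x).
Proof.
move=> Xx; elim: n => [|n [nu [size_nu X_nu]]]; first by exists [::]; rewrite wcat_nil.
have [y Xy shift_y] : ((@shift A) @` X) (wcat nu x) by rewrite shiftX.
exists (y 0 :: nu); split; first by rewrite /= size_nu.
by rewrite -cat1s -wcat_cat -shift_y wcat1_shift.
Qed.

Lemma PsetP_suffix l l' v mu : l <= l' -> X v ->
  Pset l v mu <-> exists2 nu, size nu = l' - l & Pset l' v (nu ++ mu).
Proof.
move=> le_ll' Xv; split.
  case=> size_mu X_mu; have [nu [size_nu X_nu]] := X_extend_left (l' - l) X_mu.
  exists nu => //; split; first by rewrite size_cat size_nu size_mu subnK.
  by rewrite -wcat_cat.
case=> nu size_nu [size_cat_mu X_mu]; rewrite -wcat_cat in X_mu; split.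
  by move: size_cat_mu; rewrite size_cat size_nu; lia.
by rewrite -(shiftn_wcat nu (wcat mu v)); exact: X_shiftn.
Qed.

Lemma Pset_eq_leq l l' v v' : l <= l' -> X v -> X v' ->
  Pset l' v = Pset l' v' -> Pset l v = Pset l v'.
Proof.
move=> le_ll' Xv Xv' eq_P; apply/funext => mu; apply/propext.
by rewrite (PsetP_suffix _ le_ll' Xv) (PsetP_suffix _ le_ll' Xv') eq_P.
Qed.

End PSets.

Section Classes.
Variable A : finType.
Variable X : set (nat -> A).
Hypothesis shiftX : (@shift A) @` X = X.
Implicit Types (x y z w u : nat -> A).

Lemma klE k l z w : kl_equiv X k l z w <->
  (forall i, i < k -> z i = w i) /\ Pset X l (shiftn k z) = Pset X l (shiftn k w).
Proof. by rewrite /kl_equiv !PlE. Qed.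

Lemma kl_sym k l z w : kl_equiv X k l z w -> kl_equiv X k l w z.
Proof. by case=> eq_zw eq_P; split=> // i lt_ik; rewrite eq_zw. Qed.

Lemma kl_trans k l z w u :
  kl_equiv X k l z w -> kl_equiv X k l w u -> kl_equiv X k l z u.
Proof.
by case=> eq_zw eq_P [eq_wu eq_P']; split=> [i lt_ik|]; rewrite ?eq_zw ?eq_wu ?eq_P.
Qed.

Lemma kl_equiv_predk k d z w :
  kl_equiv X k.+1 (k.+1 + d) z w -> kl_equiv X k (k + d) z w.
Proof.
move/klE=> [eq_zw eq_P]; apply/klE; split=> [i lt_ik|]; first by apply: eq_zw; lia.
rewrite (shiftn_cons k z) (shiftn_cons k w) eq_zw //.
by apply/funext => mu; apply/propext; rewrite !Pset_wcat1 -addSn eq_P.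
Qed.

Lemma kl_equiv_leq k d d' z w : X z -> X w -> d <= d' ->
  kl_equiv X k (k + d') z w -> kl_equiv X k (k + d) z w.
Proof.
move=> Xz Xw le_dd' /klE [eq_zw eq_P]; apply/klE; split=> //.
by apply: (Pset_eq_leq shiftX _ _ _ eq_P); rewrite ?leq_add2l //; exact: X_shiftn.
Qed.

Lemma kl_equiv_mono k d k' d' z w : X z -> X w -> k <= k' -> d <= d' ->
  kl_equiv X k' (k' + d') z w -> kl_equiv X k (k + d) z w.
Proof.
move=> Xz Xw le_kk' le_dd' /(kl_equiv_leq Xz Xw le_dd').
rewrite -(subnKC le_kk'); elim: (k' - k) => [|n IH]; first by rewrite addn0.
by rewrite addnS => /kl_equiv_predk.
Qed.

Lemma kl_equiv_shift k d z w : X z -> X w ->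
  kl_equiv X k.+1 (k.+1 + d) z w -> kl_equiv X k (k + d) (shift z) (shift w).
Proof.
move=> Xz Xw /klE [eq_zw eq_P]; apply/klE; split=> [i lt_ik|]; first exact: eq_zw.
rewrite !shiftn_shift; apply: (Pset_eq_leq shiftX _ _ _ eq_P); rewrite ?addSn //.
all: exact: X_shiftn.
Qed.

Lemma cls_self k l z : X z -> cls X k l z z.
Proof. by []. Qed.

Lemma cls_eq k l z w : kl_equiv X k l z w -> cls X k l z = cls X k l w.
Proof.
move=> zw; apply/seteqP; split=> y [Xy e]; split=> //.
  exact: kl_trans (kl_sym zw) e.
exact: kl_trans zw e.
Qed.

Definition tlimit (xt : tpoint A) x := forall k d z i, xt k d z -> i < k -> z i = x i.

Section Point.
Variable xt : tpoint A.
Hypothesis Xt_xt : Xt X xt.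

Lemma Xt_cls k d z : xt k d z -> xt k d = cls X k (k + d) z.
Proof. by case: Xt_xt => _ compat; apply: compat. Qed.

Lemma Xt_X k d z : xt k d z -> X z.
Proof. by move=> xt_z; move: (xt_z); rewrite (Xt_cls xt_z) => -[]. Qed.

Lemma Xt_nonempty k d : exists z, xt k d z.
Proof. by case: Xt_xt => classes _; have [z [Xz ->]] := classes k d; exists z. Qed.

Lemma Xt_mono k d k' d' z : k <= k' -> d <= d' -> xt k' d' z -> xt k d z.
Proof.
move=> le_kk' le_dd' xt_z; case: Xt_xt => _ compat.
by rewrite (compat k d k' d' le_kk' le_dd' z xt_z); exact/cls_self/(Xt_X xt_z).
Qed.

Lemma Xt_same k d z w : xt k d z -> xt k d w -> kl_equiv X k (k + d) z w.
Proof. by move=> xt_z; rewrite (Xt_cls xt_z) => -[]. Qed.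

Lemma Xt_agree k d k' d' z w i :
  xt k d z -> xt k' d' w -> i < k -> i < k' -> z i = w i.
Proof.
move=> xt_z xt_w lt_ik lt_ik'.
have xt_z' : xt i.+1 0 z by apply: Xt_mono xt_z.
have xt_w' : xt i.+1 0 w by apply: Xt_mono xt_w.
by case: (Xt_same xt_z' xt_w') => agree _; apply: agree.
Qed.

Lemma Xt_limit : closed_seqset X -> exists2 x, X x & tlimit xt x.
Proof.
move=> closedX; have [f xt_f] := choice (fun n => Xt_nonempty n.+1 0).
have lim_f : tlimit xt (fun n => f n n).
  by move=> k d z i xt_z lt_ik; apply: Xt_agree xt_z (xt_f i) lt_ik _.
exists (fun n => f n n) => //; apply: closedX => n; have [z xt_z] := Xt_nonempty n 0.
by exists z; split=> [|i lt_in]; [exact: Xt_X xt_z | exact: lim_f xt_z lt_in].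
Qed.

Lemma sigmatE k d z : xt k.+1 d z -> sigmat X xt k d = cls X k (k + d) (shift z).
Proof.
move=> xt_z; apply/seteqP; split=> [y [z' [xt_z' y_z']]|y y_z]; last by exists z.
by rewrite (cls_eq (kl_equiv_shift (Xt_X xt_z) (Xt_X xt_z') (Xt_same xt_z xt_z'))).
Qed.

Lemma sigmat_limit x y : tlimit xt y -> tlimit (sigmat X xt) x -> shift y = x.
Proof.
move=> lim_y lim_x; apply/funext => n; have [u xt_u] := Xt_nonempty n.+2 0.
rewrite /shift -(lim_y _ _ _ _ xt_u (ltnSn _)); apply: (lim_x n.+1 0 (shift u)) => //.
by rewrite (sigmatE xt_u); exact/cls_self/(X_shift shiftX)/(Xt_X xt_u).
Qed.

End Point.

Lemma Xt_imath x : X x -> Xt X (imath X x).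
Proof.
move=> Xx; split=> [k d|k d k' d' le_kk' le_dd' z [Xz xz]]; first by exists x.
exact/cls_eq/(kl_equiv_mono Xx Xz le_kk' le_dd').
Qed.

Lemma sigmat_imath x : X x -> sigmat X (imath X x) = imath X (shift x).
Proof.
by move=> Xx; apply/funext => k; apply/funext => d; rewrite (sigmatE (Xt_imath Xx) (z := x)).
Qed.

Lemma imath_inj x y : X x -> X y -> imath X x = imath X y -> x = y.
Proof.
move=> Xx Xy eq_xy; apply/funext => i.
have : imath X y i.+1 0 y by [].
by rewrite -eq_xy => -[_ [agree _]]; exact: agree.
Qed.

End Classes.

Section Fibre.
Variable A : finType.
Variable X : set (nat -> A).
Hypothesis shiftX : (@shift A) @` X = X.
Variables y1 y2 : tpoint A.
Hypothesis Xt_y1 : Xt X y1.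
Hypothesis Xt_y2 : Xt X y2.
Hypothesis sigmat_y12 : sigmat X y1 = sigmat X y2.

Lemma fibre_shift_equiv k d u1 u2 : y1 k.+1 d.+1 u1 -> y2 k.+1 d.+1 u2 ->
  kl_equiv X k (k + d.+1) (shift u1) (shift u2).
Proof.
move=> y1_u1 y2_u2; have := sigmatE shiftX Xt_y2 y2_u2.
rewrite -sigmat_y12 (sigmatE shiftX Xt_y1 y1_u1) => eq_cls.
have : cls X k (k + d.+1) (shift u2) (shift u2).
  exact/cls_self/(X_shift shiftX)/(Xt_X Xt_y2 y2_u2).
by rewrite -eq_cls => -[].
Qed.

Lemma fibre_eq_of_head l1 l2 : tlimit y1 l1 -> tlimit y2 l2 -> l1 0 = l2 0 -> y1 = y2.
Proof.
move=> lim_l1 lim_l2 head; apply/funext => k; apply/funext => d.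
have [u1 y1_u1] := Xt_nonempty Xt_y1 k.+1 d.+1.
have [u2 y2_u2] := Xt_nonempty Xt_y2 k.+1 d.+1.
rewrite (Xt_cls Xt_y1 (Xt_mono Xt_y1 (leqnSn k) (leqnSn d) y1_u1)).
rewrite (Xt_cls Xt_y2 (Xt_mono Xt_y2 (leqnSn k) (leqnSn d) y2_u2)).
have [agree eq_P] := (klE _ _ _ _ _).1 (fibre_shift_equiv y1_u1 y2_u2).
apply/cls_eq/kl_equiv_predk/klE; split=> [[|i] lt_ik|].
- by rewrite (lim_l1 _ _ _ _ y1_u1) // (lim_l2 _ _ _ _ y2_u2).
- exact: agree.
by rewrite -!shiftn_shift addSnnS.
Qed.

Lemma fibre_class_meets_Spl l1 l2 k d : tlimit y1 l1 -> tlimit y2 l2 ->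
  l1 0 <> l2 0 -> exists2 w, sigmat X y1 k d w & Spl X (@shift A) w.
Proof.
move=> lim_l1 lim_l2 head.
have [u1 y1_u1] := Xt_nonempty Xt_y1 k.+1 d.+1.
have [u2 y2_u2] := Xt_nonempty Xt_y2 k.+1 d.+1.
have [Xu1 Xu2] := (Xt_X Xt_y1 y1_u1, Xt_X Xt_y2 y2_u2).
have [agree eq_P] := (klE _ _ _ _ _).1 (fibre_shift_equiv y1_u1 y2_u2).
exists (shift u1).
  rewrite (sigmatE shiftX Xt_y1 (Xt_mono Xt_y1 (leqnn _) (leqnSn d) y1_u1)).
  exact/cls_self/(X_shift shiftX).
split; first exact: X_shift.
exists u1, (wcat [:: u2 0] (shift u1)); do !split=> //; last exact: shift_wcat1.
- set s := u2 0 :: mkseq (shift u2) k.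
  have P2_s : Pset X k.+1 (shiftn k (shift u2)) s.
    split; first by rewrite /= size_mkseq.
    by rewrite /s -cat1s -wcat_cat wcat_mkseq_shiftn // wcat1_shift.
  have [_] : Pset X k.+1 (shiftn k (shift u1)) s.
    rewrite (Pset_eq_leq shiftX _ _ _ eq_P) ?addnS ?ltnS ?leq_addr //;
    exact/(X_shiftn shiftX k)/(X_shift shiftX).
  by rewrite /s -cat1s -wcat_cat wcat_mkseq_shiftn // => i /agree ->.
- move=> /(congr1 (fun x => x 0)); rewrite /wcat /= => head12; apply: head.
  by rewrite -(lim_l1 _ _ _ _ y1_u1) // -(lim_l2 _ _ _ _ y2_u2).
Qed.

End Fibre.

Lemma finite_set_separated (A : finType) (S : set (nat -> A)) x : finite_set S ->
  exists K, forall w, S w -> (forall i, i < K -> w i = x i) -> w = x.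
Proof.
move=> finS.
have bound_diff w : exists m, w <> x -> exists2 j, j < m & w j <> x j.
  have [->|neq_wx] := pselect (w = x); first by exists 0.
  have [j neq_j] : exists j, w j <> x j.
    by apply/existsNP => eq_wx; apply/neq_wx/funext.
  by exists j.+1 => _; exists j.
have [f fP] := choice bound_diff.
have [s eq_s] := (finite_seqP _).1 (finite_image f finS).
exists (\max_(m <- s) m) => w Sw agree; apply: contrapT => neq_wx.
have [j lt_j neq_j] := fP w neq_wx; apply/neq_j/agree/(leq_trans lt_j).
have : (f @` S) (f w) by exists w.
by rewrite eq_s => s_fw; apply: (leq_bigmax_seq (F := id)).
Qed.

Lemma Xt_eq_imath (A : finType) (X : set (nat -> A)) (S : set (nat -> A))
  (xt : tpoint A) x : finite_set S -> Xt X xt -> tlimit xt x ->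
  (forall k d, exists2 w, xt k d w & S w) -> xt = imath X x.
Proof.
move=> finS Xt_xt lim_x meets; have [K sepK] := finite_set_separated x finS.
apply/funext => k; apply/funext => d; have [w xt_w Sw] := meets (k + K) d.
have eq_wx : w = x.
  by apply: sepK => // i lt_i; apply: lim_x xt_w _; rewrite ltn_addl.
rewrite eq_wx in xt_w.
by rewrite (Xt_cls Xt_xt (Xt_mono Xt_xt (leq_addr _ _) (leqnn _) xt_w)).
Qed.

Lemma Spl_Xt_sub (A : finType) (X : set (nat -> A)) :
  closed_seqset X -> (@shift A) @` X = X -> finite_set (Spl X (@shift A)) ->
  Spl (Xt X) (sigmat X) `<=` imath X @` Spl X (@shift A).
Proof.
move=> closedX shiftX finSpl xt.
move=> [Xt_xt [y1 [y2 [Xt_y1 [Xt_y2 [neq_y12 [sigma_y1 sigma_y2]]]]]]].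
have sigma_y12 : sigmat X y1 = sigmat X y2 by rewrite sigma_y1 sigma_y2.
have [x Xx lim_x] := Xt_limit Xt_xt closedX.
have [l1 Xl1 lim_l1] := Xt_limit Xt_y1 closedX.
have [l2 Xl2 lim_l2] := Xt_limit Xt_y2 closedX.
have head : l1 0 <> l2 0.
  by move=> /(fibre_eq_of_head shiftX Xt_y1 Xt_y2 sigma_y12 lim_l1 lim_l2).
exists x.
  split=> //; exists l1, l2; do !split=> //.
  - by move=> eq_l12; apply: head; rewrite eq_l12.
  - by apply: (sigmat_limit shiftX Xt_y1 lim_l1); rewrite sigma_y1.
  - by apply: (sigmat_limit shiftX Xt_y2 lim_l2); rewrite sigma_y2.
apply/esym/(Xt_eq_imath finSpl Xt_xt lim_x) => k d; rewrite -sigma_y1.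
exact: (fibre_class_meets_Spl shiftX Xt_y1 Xt_y2 sigma_y12 k d lim_l1 lim_l2 head).
Qed.

Lemma imath_Spl (A : finType) (X : set (nat -> A)) :
  (@shift A) @` X = X ->
  imath X @` Spl X (@shift A) `<=` Spl (Xt X) (sigmat X).
Proof.
move=> shiftX _ [x [Xx [x1 [x2 [Xx1 [Xx2 [neq_x12 [shift_x1 shift_x2]]]]]]] <-].
split; first exact: Xt_imath.
exists (imath X x1), (imath X x2); do 2 (split; first exact: Xt_imath).
split; first by move=> eq_imath; apply/neq_x12/(imath_inj Xx1 Xx2).
by rewrite !sigmat_imath // shift_x1 shift_x2.
Qed.

Theorem corollary3p3 (A : finType) (X : set (nat -> A))
  (hclosed : closed_seqset X)
  (hsurj : (@shift A) @` X = X)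
  (hfin : finite_set (Spl X (@shift A))) :
  Spl (Xt X) (sigmat X) = imath X @` Spl X (@shift A) /\
  Spl (Xt X) (sigmat X) #= Spl X (@shift A).
Proof.
have eq_Spl : Spl (Xt X) (sigmat X) = imath X @` Spl X (@shift A).
  by apply/seteqP; split; [exact: Spl_Xt_sub | exact: imath_Spl].
split=> //; rewrite eq_Spl; apply: inj_card_eq => x y.
by rewrite !in_setE => -[Xx _] [Xy _]; exact: imath_inj.
Qed.
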